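(* Consider the problem $\min_{x\in\mathbb{R}^n} F(x):=f(x)+g(x)$ subject to $Ax=b$, under the setting described in the context, and let $\lambda^*$ be an optimal solution of $\max_{\lambda\in\mathbb{R}^m} d(\lambda)$. Let $\{\lambda^k\}$ be generated by the IAL framework described in the context, where the tolerance sequence $\{\eta_k\}$ is positive, nonincreasing, and satisfies $\sum_{k=1}^{+\infty}\eta_k<+\infty$. Let $\delta_k:=d(\lambda^* )-d(\lambda^k)$, $$B:=\sqrt{\|\lambda^1-\lambda^*\|^2+2\beta\sum_{k=1}^{+\infty}\eta_k},\qquad \theta:=\frac{\beta}{4B^2},$$ and let $k_0\ge 4$ be an integer such that $$\max_{k\ge k_0}\delta_k\le\frac{1}{2\theta}\quad\text{and}\quad\max_{k\ge k_0}\eta_k\le\frac{1}{24\theta}.$$ Suppose moreover that $$\sqrt{\frac{\eta_{k+1}}{\eta_k}}\ge\frac{k-2}{k},\qquad k=k_0,k_0+1,\dots.$$ Define $\tau_1:=\frac{k_0}{4\theta}$ and $\tau_2:=\frac{1}{4\theta\sqrt{\eta_{k_0}}}$. Then $$\delta_k\le\frac{\tau_1}{k}+\tau_2\sqrt{\eta_k},\qquad k=k_0,k_0+1,\dots.$$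
   Context: Let $A\in\mathbb{R}^{m\times n}$ and $b\in\mathbb{R}^m$. Let $f:\mathbb{R}^n\to\mathbb{R}$ be convex and differentiable with Lipschitz continuous gradient. Let $g:\mathbb{R}^n\to\mathbb{R}\cup\{+\infty\}$ be a closed proper convex (possibly nonsmooth) function with bounded domain. Fix a penalty parameter $\beta>0$. For $\lambda\in\mathbb{R}^m$, define $$\hat f_\beta(x;\lambda):=f(x)+\langle\lambda,Ax-b\rangle+\tfrac{\beta}{2}\|Ax-b\|^2,\qquad \mathcal{L}_\beta(x;\lambda):=\hat f_\beta(x;\lambda)+g(x),$$ and $d(\lambda):=\min_{x\in\mathbb{R}^n}\mathcal{L}_\beta(x;\lambda)$. Here $\nabla\hat f_\beta(x;\lambda)$ denotes the gradient of $\hat f_\beta$ with respect to $x$. IAL framework: choose $x^1\in\operatorname{dom} g$, $\lambda^1\in\mathbb{R}^m$, and a nonnegative sequence $\{\eta_k\}$. For $k=1,2,\dots$: find a point $x^{k+1}$ such that $$\max_{x\in\mathbb{R}^n}\Big\{\langle\nabla\hat f_\beta(x^{k+1};\lambda^k),\,x^{k+1}-x\rangle+g(x^{k+1})-g(x)\Big\}\le\eta_k,$$ and then set $\lambda^{k+1}=\lambda^k+\beta(Ax^{k+1}-b)$. *)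

From HB Require Import structures.
From mathcomp Require Import all_boot all_order all_algebra.
From mathcomp Require Import all_classical all_reals all_analysis.
Set Implicit Arguments. Unset Strict Implicit. Unset Printing Implicit Defensive.
Import Order.TTheory GRing.Theory Num.Theory.
Import numFieldNormedType.Exports.
Local Open Scope classical_set_scope.
Local Open Scope ring_scope.

Section Defs.
Variable R : realType.

Definition dotv (p : nat) (u v : 'cV[R]_p) : R := \sum_(i < p) u i 0 * v i 0.
Definition enorm (p : nat) (u : 'cV[R]_p) : R := Num.sqrt (dotv u u).

Definition convex_fun (n : nat) (f : 'cV[R]_n -> R) : Prop :=
  forall (x y : 'cV[R]_n) (t : R), 0 <= t <= 1 ->
    f (t *: x + (1 - t) *: y) <= t * f x + (1 - t) * f y.

Definition is_gradient (n : nat) (f : 'cV[R]_n -> R) (gf : 'cV[R]_n -> 'cV[R]_n) : Prop :=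
  forall x : 'cV[R]_n, forall eps : R, 0 < eps -> exists2 del : R, 0 < del &
    forall h : 'cV[R]_n, enorm h < del ->
      `| f (x + h) - f x - dotv (gf x) h | <= eps * enorm h.

Definition lipschitz_grad (n : nat) (gf : 'cV[R]_n -> 'cV[R]_n) : Prop :=
  exists L : R, forall x y, enorm (gf x - gf y) <= L * enorm (x - y).

Definition proper_fun (n : nat) (g : 'cV[R]_n -> \bar R) : Prop :=
  (exists x, g x < +oo)%E /\ (forall x, -oo < g x)%E.

Definition convex_efun (n : nat) (g : 'cV[R]_n -> \bar R) : Prop :=
  forall (x y : 'cV[R]_n) (t : R), 0 < t < 1 ->
    (g (t *: x + (1 - t) *: y)%R <= t%:E * g x + (1 - t)%:E * g y)%E.

Definition closed_efun (n : nat) (g : 'cV[R]_n -> \bar R) : Prop :=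
  closed [set p : 'cV[R]_n * R | (g p.1 <= p.2%:E)%E].

Definition bounded_dom (n : nat) (g : 'cV[R]_n -> \bar R) : Prop :=
  exists M : R, forall x, (g x < +oo)%E -> enorm x <= M.

Definition grad_fhat (m n : nat) (gf : 'cV[R]_n -> 'cV[R]_n) (A : 'M[R]_(m, n))
  (b : 'cV[R]_m) (beta : R) (x : 'cV[R]_n) (lam : 'cV[R]_m) : 'cV[R]_n :=
  gf x + A^T *m lam + beta *: (A^T *m (A *m x - b)).

Definition fhat (m n : nat) (f : 'cV[R]_n -> R) (A : 'M[R]_(m, n))
  (b : 'cV[R]_m) (beta : R) (x : 'cV[R]_n) (lam : 'cV[R]_m) : R :=
  f x + dotv lam (A *m x - b) + beta / 2 * enorm (A *m x - b) ^+ 2.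

Definition Lag (m n : nat) (f : 'cV[R]_n -> R) (g : 'cV[R]_n -> \bar R)
  (A : 'M[R]_(m, n)) (b : 'cV[R]_m) (beta : R) (x : 'cV[R]_n) (lam : 'cV[R]_m)
  : \bar R := ((fhat f A b beta x lam)%:E + g x)%E.

(* d(lam) = min_x L_beta(x;lam), written as an infimum (attained in this setting) *)
Definition dual (m n : nat) (f : 'cV[R]_n -> R) (g : 'cV[R]_n -> \bar R)
  (A : 'M[R]_(m, n)) (b : 'cV[R]_m) (beta : R) (lam : 'cV[R]_m) : \bar R :=
  ereal_inf [set Lag f g A b beta x lam | x in [set: 'cV[R]_n]].

End Defs.

From HB Require Import structures.
From mathcomp Require Import all_boot all_order all_algebra.
From mathcomp Require Import all_classical all_reals all_analysis.
From mathcomp Require Import ring lra.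
Import Order.TTheory GRing.Theory Num.Theory.
Import numFieldNormedType.Exports.
Local Open Scope classical_set_scope.
Local Open Scope ring_scope.
Set Implicit Arguments. Unset Strict Implicit. Unset Printing Implicit Defensive.

(* Lower bounds on [d] come from the inexact stationarity of [x^(k+1)]: together with
   the gradient inequality for [f] it shows [d (lam^k + w) >= L(x^(k+1); lam^k) - eta_k
   + <w, A x^(k+1) - b> - |w|^2 / (2 beta)], while [d l <= L(x^(k+1); l)], affine in [l].
   With [w = 0] and [w = beta (A x^(k+1) - b)] this gives for the dual gap
     [delta_(k+1) <= delta_k + eta_k]  and, when [eta_k <= delta_k],
     [delta_(k+1) <= delta_k + eta_k - 2 theta (delta_k - eta_k)^2],
   where Cauchy-Schwarz and [|lam^k - lam*|^2 <= B^2] (each step increases it by at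
   most [2 beta eta_k]) produce [theta].  An induction on [k], in which the growth
   condition on [eta] pays for the shift from [k0/k] to [k0/(k+1)], turns this
   recursion into the rate. *)

Section PerturbedDescent.
Variable R : rcfType.

(* One step of the induction below, with [x = k0/k], [y = k0/(k+1)],
   [s = sqrt (e_k / e_k0)] and [q = sqrt (e_(k+1) / e_k)]. *)
Lemma perturbed_descent_step (a a' e x y s q : R) :
  a <= (x + s) / 4 -> 0 <= e -> e <= s ^+ 2 / 24 -> 0 < s -> s <= 1 ->
  0 < x -> x <= 1 -> x - y <= x ^+ 2 / 4 -> 0 <= y -> 1 - x / 2 <= q ->
  a' <= a + e -> (e <= a -> a' <= a + e - 2 * (a - e) ^+ 2) ->
  a' <= (y + q * s) / 4.
Proof.
move=> ha e0 es s0 s1 x0 x1 xy y0 hq step_le step_descent.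
have qs : (1 - x / 2) * s <= q * s by rewrite ler_pM2r.
have s2 : s ^+ 2 <= s by nra.
have x2 : x ^+ 2 <= x by nra.
have xs : 0 <= x * s by nra.
have [ea|ae] := lerP e a; last by nra.
have descent := step_descent ea.
have [small|large] := lerP ((x + s) / 4) (e + 1 / 4).
  (* [t |-> t + e - 2 (t - e)^2] is nondecreasing for [t <= e + 1/4] *)
  have mono : a + e - 2 * (a - e) ^+ 2 <= (x + s) / 4 + e - 2 * ((x + s) / 4 - e) ^+ 2.
    have : 0 <= ((x + s) / 4 - a) * (1 - 2 * ((x + s) / 4 + a - 2 * e)).
      by apply: mulr_ge0; lra.
    nra.
  have gap : x / 4 + 5 * s / 24 <= (x + s) / 4 - e by nra.
  have gap2 : (x / 4 + 5 * s / 24) ^+ 2 <= ((x + s) / 4 - e) ^+ 2.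
    by rewrite ler_sqr ?nnegrE; nra.
  nra.
have top : a + e - 2 * (a - e) ^+ 2 <= 2 * e + 1 / 8.
  by have := sqr_ge0 (a - e - 1 / 4); nra.
have sq : 0 <= 1 / 16 - s / 16 + s ^+ 2 / 24 by have := sqr_ge0 (s - 3 / 4); nra.
have : 0 <= 3 * x / 16 + s / 4 - x * s / 8 - s ^+ 2 / 12 - 1 / 8.
  have : 1 < x + s by lra.
  nra.
nra.
Qed.

Lemma perturbed_descent_rate (a e : nat -> R) (k0 : nat) :
  (4 <= k0)%N -> a k0 <= 1 / 2 -> e k0 <= 1 / 24 ->
  (forall k, (k0 <= k)%N -> 0 < e k) ->
  (forall k, (k0 <= k)%N -> e k.+1 <= e k) ->
  (forall k, (k0 <= k)%N -> (k%:R - 2) / k%:R <= Num.sqrt (e k.+1 / e k)) ->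
  (forall k, (k0 <= k)%N -> a k.+1 <= a k + e k) ->
  (forall k, (k0 <= k)%N -> e k <= a k -> a k.+1 <= a k + e k - 2 * (a k - e k) ^+ 2) ->
  forall k, (k0 <= k)%N -> a k <= (k0%:R / k%:R + Num.sqrt (e k) / Num.sqrt (e k0)) / 4.
Proof.
move=> k04 a0 e0 e_gt0 e_mono e_ratio step_le step_descent.
have k0_gt0 : 0 < k0%:R :> R by rewrite ltr0n; apply: leq_trans k04.
have k0_ge4 : 4 <= k0%:R :> R by rewrite (ler_nat R 4 k0).
have ek0 := e_gt0 _ (leqnn k0).
have se0 : 0 < Num.sqrt (e k0) by rewrite sqrtr_gt0.
have e_le0 j : e (k0 + j)%N <= e k0.
  elim: j => [|j IH]; first by rewrite addn0.
  by rewrite addnS; apply: le_trans (e_mono _ (leq_addr _ _)) IH.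
suff rate j : a (k0 + j)%N <=
    (k0%:R / (k0 + j)%:R + Num.sqrt (e (k0 + j)%N) / Num.sqrt (e k0)) / 4.
  by move=> k /subnKC <-; apply: rate.
elim: j => [|j IH].
  by rewrite addn0 !divff ?gt_eqF //; lra.
rewrite addnS -natr1; set k := (k0 + j)%N in IH *.
have kk : (k0 <= k)%N by rewrite leq_addr.
have kk0 : k0%:R <= k%:R :> R by rewrite ler_nat.
have k_gt0 : 0 < k%:R :> R by lra.
have ek := e_gt0 _ kk; have ek1 := e_gt0 _ (leqW kk).
have -> : Num.sqrt (e k.+1) / Num.sqrt (e k0) =
    Num.sqrt (e k.+1 / e k) * (Num.sqrt (e k) / Num.sqrt (e k0)).
  by rewrite mulrA -sqrtrM ?divr_ge0 ?ltW // divfK ?gt_eqF.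
apply: (perturbed_descent_step IH (ltW ek)).
- have -> : (Num.sqrt (e k) / Num.sqrt (e k0)) ^+ 2 = e k / e k0.
    by rewrite expr_div_n !sqr_sqrtr ?ltW.
  rewrite -mulrA ler_pMr // -invfM invf_ge1 ?mulr_gt0 //; lra.
- by rewrite divr_gt0 // sqrtr_gt0.
- by rewrite ler_pdivrMr // mul1r; apply: ler_wsqrtr (e_le0 j).
- by rewrite divr_gt0 //; lra.
- by rewrite ler_pdivrMr ?mul1r //; lra.
- rewrite -subr_ge0.
  have -> : (k0%:R / k%:R) ^+ 2 / 4 - (k0%:R / k%:R - k0%:R / (k%:R + 1)) =
      k0%:R * (k0%:R * (k%:R + 1) - 4 * k%:R) / (4 * k%:R ^+ 2 * (k%:R + 1)) :> R.
    by field; rewrite !gt_eqF //; lra.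
  by rewrite divr_ge0 ?mulr_ge0 //; nra.
- by rewrite divr_ge0 //; lra.
- apply: le_trans (e_ratio _ kk).
  have -> : (k%:R - 2) / k%:R = 1 - 2 / k%:R :> R by field; rewrite gt_eqF //; lra.
  rewrite lerD2l lerN2 ler_pdivrMr; last lra.
  by rewrite mulrAC divfK ?gt_eqF //; lra.
- exact: step_le.
- exact: step_descent.
Qed.

Lemma perturbed_descent_rate_scaled (c : R) (a e : nat -> R) (k0 : nat) :
  0 < c -> (4 <= k0)%N -> a k0 <= 1 / (2 * c) -> e k0 <= 1 / (24 * c) ->
  (forall k, (k0 <= k)%N -> 0 < e k) ->
  (forall k, (k0 <= k)%N -> e k.+1 <= e k) ->
  (forall k, (k0 <= k)%N -> (k%:R - 2) / k%:R <= Num.sqrt (e k.+1 / e k)) ->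
  (forall k, (k0 <= k)%N -> a k.+1 <= a k + e k) ->
  (forall k, (k0 <= k)%N -> e k <= a k ->
     a k.+1 <= a k + e k - 2 * c * (a k - e k) ^+ 2) ->
  forall k, (k0 <= k)%N ->
    a k <= (k0%:R / k%:R + Num.sqrt (e k) / Num.sqrt (e k0)) / (4 * c).
Proof.
move=> c0 k04 a0 e0 e_gt0 e_mono e_ratio step_le step_descent k kk.
have c_div (t : R) : c * (1 / (t * c)) = 1 / t.
  by rewrite !mul1r invfM mulrCA divff ?gt_eqF ?mulr1.
have cancel_c (u v : R) : c * u / (c * v) = u / v.
  by rewrite invfM mulrACA divff ?gt_eqF ?mul1r.
have sqrt_cancel_c (u v : R) :
    Num.sqrt (c * u) / Num.sqrt (c * v) = Num.sqrt u / Num.sqrt v.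
  by rewrite !sqrtrM ?ltW // invfM mulrACA divff ?gt_eqF ?mul1r ?sqrtr_gt0.
rewrite invfM mulrA ler_pdivlMr // mulrC -(sqrt_cancel_c (e k)).
apply: (perturbed_descent_rate (a := fun k => c * a k) (e := fun k => c * e k)) => //.
- by rewrite -(ler_pM2l c0) c_div in a0.
- by rewrite -(ler_pM2l c0) c_div in e0.
- by move=> j jk; rewrite mulr_gt0 ?e_gt0.
- by move=> j jk; rewrite ler_pM2l ?e_mono.
- by move=> j jk; rewrite cancel_c e_ratio.
- by move=> j jk; rewrite -mulrDr ler_pM2l ?step_le.
- move=> j jk; rewrite ler_pM2l // => eja.
  have -> : c * a j + c * e j - 2 * (c * a j - c * e j) ^+ 2 =
      c * (a j + e j - 2 * c * (a j - e j) ^+ 2) by ring.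
  by rewrite ler_pM2l ?step_descent.
Qed.

End PerturbedDescent.

Section InnerProduct.
Variable R : realType.
Implicit Types (p : nat) (a : R).

Lemma dotvC p (u v : 'cV[R]_p) : dotv u v = dotv v u.
Proof. by apply: eq_bigr => i _; rewrite mulrC. Qed.

Lemma dotvDl p (u v w : 'cV[R]_p) : dotv (u + v) w = dotv u w + dotv v w.
Proof. by rewrite /dotv -big_split; apply: eq_bigr => i _; rewrite !mxE mulrDl. Qed.

Lemma dotvZl p a (u w : 'cV[R]_p) : dotv (a *: u) w = a * dotv u w.
Proof. by rewrite /dotv mulr_sumr; apply: eq_bigr => i _; rewrite !mxE mulrA. Qed.

Lemma dotvNl p (u w : 'cV[R]_p) : dotv (- u) w = - dotv u w.
Proof. by rewrite -scaleN1r dotvZl mulN1r. Qed.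

Lemma dotvBl p (u v w : 'cV[R]_p) : dotv (u - v) w = dotv u w - dotv v w.
Proof. by rewrite dotvDl dotvNl. Qed.

Lemma dotvDr p (u v w : 'cV[R]_p) : dotv w (u + v) = dotv w u + dotv w v.
Proof. by rewrite dotvC dotvDl !(dotvC w). Qed.

Lemma dotvZr p a (u w : 'cV[R]_p) : dotv w (a *: u) = a * dotv w u.
Proof. by rewrite dotvC dotvZl dotvC. Qed.

Lemma dotvNr p (u w : 'cV[R]_p) : dotv w (- u) = - dotv w u.
Proof. by rewrite dotvC dotvNl dotvC. Qed.

Lemma dotvBr p (u v w : 'cV[R]_p) : dotv w (u - v) = dotv w u - dotv w v.
Proof. by rewrite dotvDr dotvNr. Qed.

Lemma dotv0l p (v : 'cV[R]_p) : dotv 0 v = 0.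
Proof. by rewrite /dotv big1 // => i _; rewrite mxE mul0r. Qed.

Definition dotvE := (dotvDl, dotvDr, dotvNl, dotvNr, dotvZl, dotvZr, dotvBl, dotvBr).

Lemma dotvv_ge0 p (u : 'cV[R]_p) : 0 <= dotv u u.
Proof. by apply: sumr_ge0 => i _; rewrite -expr2 sqr_ge0. Qed.

Lemma dotv_sqrB p a (u v : 'cV[R]_p) :
  dotv (u - a *: v) (u - a *: v) = dotv u u - 2 * a * dotv u v + a ^+ 2 * dotv v v.
Proof. by rewrite !dotvE (dotvC v u); ring. Qed.

Lemma dotv_mulmx q p (M : 'M[R]_(q, p)) (u : 'cV[R]_q) (z : 'cV[R]_p) :
  dotv u (M *m z) = dotv (M^T *m u) z.
Proof.
rewrite /dotv; under eq_bigr => i _ do rewrite mxE big_distrr /=.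
rewrite exchange_big /=; apply: eq_bigr => j _.
rewrite mxE big_distrl /=; apply: eq_bigr => i _.
by rewrite mxE mulrCA mulrA.
Qed.

Lemma enorm_ge0 p (u : 'cV[R]_p) : 0 <= enorm u.
Proof. exact: sqrtr_ge0. Qed.

Lemma sqr_enorm p (u : 'cV[R]_p) : enorm u ^+ 2 = dotv u u.
Proof. by rewrite sqr_sqrtr // dotvv_ge0. Qed.

Lemma enormZ p a (u : 'cV[R]_p) : 0 <= a -> enorm (a *: u) = a * enorm u.
Proof.
move=> a0; rewrite /enorm dotvZl dotvZr mulrA -expr2 sqrtrM ?sqr_ge0 //.
by rewrite sqrtr_sqr ger0_norm.
Qed.

Lemma dotv_sqr_le p (u v : 'cV[R]_p) : dotv u v ^+ 2 <= dotv u u * dotv v v.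
Proof.
set uu := dotv u u; set vv := dotv v v; set uv := dotv u v.
have uu0 : 0 <= uu := dotvv_ge0 u; have vv0 : 0 <= vv := dotvv_ge0 v.
have := dotvv_ge0 (vv *: u - uv *: v); have := dotvv_ge0 (uu *: v - uv *: u).
have := dotvv_ge0 (u - v); have := dotvv_ge0 (u + v).
rewrite !dotvE (dotvC v u) -/uu -/vv -/uv => normD normB normDv normDu.
have [vv_eq0|vv_neq0] := eqVneq vv 0.
  have [uu_eq0|uu_neq0] := eqVneq uu 0.
    have -> : uv = 0 by lra.
    by rewrite uu_eq0 mul0r expr0n.
  have uu_gt0 : 0 < uu by rewrite lt_def uu_neq0.
  by rewrite -subr_ge0 -(pmulr_rge0 _ uu_gt0); nra.
have vv_gt0 : 0 < vv by rewrite lt_def vv_neq0.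
by rewrite -subr_ge0 -(pmulr_rge0 _ vv_gt0); nra.
Qed.

End InnerProduct.

Section ConvexGradient.
Variables (R : realType) (p : nat) (f : 'cV[R]_p -> R) (gf : 'cV[R]_p -> 'cV[R]_p).
Hypotheses (f_convex : convex_fun f) (f_grad : is_gradient f gf).

Lemma convex_fun_segment x h t : 0 <= t <= 1 ->
  f (x + t *: h) <= f x + t * (f (x + h) - f x).
Proof.
move=> t01; have := f_convex (x + h) x t01.
by rewrite scalerDr scalerBl scale1r addrC addrA subrK; lra.
Qed.

Lemma gradient_ineq x z : f x + dotv (gf x) (z - x) <= f z.
Proof.
set h := z - x; have h0 := enorm_ge0 h.
have xhz : x + h = z by rewrite addrC subrK.
have slope_le eps : 0 < eps -> dotv (gf x) h <= f z - f x + eps * enorm h.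
  move=> eps0; have [del del0 near_x] := f_grad x eps0.
  (* compare the first-order expansion with the chord at a small step [t h] *)
  set t := Num.min 1 (del / (2 * (enorm h + 1))).
  have t0 : 0 < t by rewrite lt_min ltr01 /= divr_gt0 // mulr_gt0 // ltr_wpDl.
  have t01 : 0 <= t <= 1 by rewrite ltW // ge_min lexx.
  have th_small : enorm (t *: h) < del.
    have : t * (2 * (enorm h + 1)) <= del.
      by rewrite -ler_pdivlMr ?mulr_gt0 ?ltr_wpDl // ge_min lexx orbT.
    move=> le_del; rewrite (enormZ _ (ltW t0)); nra.
  have := near_x _ th_small; rewrite dotvZr (enormZ _ (ltW t0)) ler_norml => /andP[lower _].
  have := convex_fun_segment x h t01; rewrite xhz => chord.
  have : t * dotv (gf x) h <= t * (f z - f x + eps * enorm h) by lra.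
  by rewrite ler_pM2l.
rewrite -lerBrDl; apply/ler_addgt0Pr => e e0.
have h1_gt0 : 0 < enorm h + 1 by rewrite ltr_wpDl.
apply: le_trans (slope_le _ (divr_gt0 e0 h1_gt0)) _.
rewrite lerD2l mulrAC ler_pdivrMr // ler_pM2l //; lra.
Qed.

End ConvexGradient.

Section DualBounds.
Variables (R : realType) (m n : nat) (A : 'M[R]_(m, n)) (b : 'cV[R]_m).
Variables (f : 'cV[R]_n -> R) (gf : 'cV[R]_n -> 'cV[R]_n) (g : 'cV[R]_n -> \bar R).
Variable beta : R.

Local Notation d := (dual f g A b beta).

Lemma dual_le_lagrangian (l lk : 'cV[R]_m) (xk : 'cV[R]_n) (gxk : R) :
  g xk = gxk%:E ->
  (d l <= (fhat f A b beta xk lk + dotv (l - lk) (A *m xk - b) + gxk)%:E)%E.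
Proof.
move=> gxkE; apply: le_trans (ereal_inf_lbound _) _; first by exists xk.
by rewrite /Lag gxkE -EFinD lee_fin /fhat dotvBl; lra.
Qed.

(* Stationarity bounds [g z] below by an affine function of [z] and the gradient
   inequality does the same for [f z]; completing the square in the penalty term
   absorbs the change of multiplier [w] at the cost [|w|^2 / (2 beta)]. *)
Lemma dual_ge_stationary (lk w : 'cV[R]_m) (xk : 'cV[R]_n) (et gxk : R) :
  convex_fun f -> is_gradient f gf -> 0 < beta -> g xk = gxk%:E ->
  (forall z, ((dotv (grad_fhat gf A b beta xk lk) (xk - z))%:E + g xk - g z
                <= et%:E)%E) ->
  ((fhat f A b beta xk lk + gxk - et + dotv w (A *m xk - b)
      - dotv w w / (2 * beta))%:E <= d (lk + w))%E.
Proof.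
move=> f_convex f_grad beta0 gxkE stat; apply/ereal_infP => _ [z _ <-].
have := stat z; rewrite /Lag gxkE.
case: (g z) => [gz| |] /=; [|by rewrite leey|by []].
rewrite -!EFinD !lee_fin => stat_z.
have grad_z := gradient_ineq f_convex f_grad xk z.
rewrite /grad_fhat in stat_z.
set r := A *m xk - b in stat_z *; set s := A *m z - b.
have Axz : A *m (xk - z) = r - s by rewrite mulmxBr opprB addrA subrK.
move: stat_z; rewrite !dotvDl dotvZl -!dotv_mulmx Axz => stat_z.
rewrite -opprB dotvNr in grad_z.
rewrite /fhat !sqr_enorm -/r -/s; clearbody r s.
have penalty : 0 <= dotv (beta *: (s - r) + w) (beta *: (s - r) + w) / (2 * beta).
  by rewrite divr_ge0 ?dotvv_ge0 // ltW // mulr_gt0.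
have expand : dotv (beta *: (s - r) + w) (beta *: (s - r) + w) / (2 * beta) =
    beta / 2 * (dotv s s - dotv r s - dotv s r + dotv r r) + (dotv w s - dotv w r)
    + dotv w w / (2 * beta).
  by rewrite !dotvE (dotvC s w) (dotvC r w); field; rewrite gt_eqF.
rewrite expand in penalty.
rewrite (dotvC s r) in penalty; move: stat_z grad_z; rewrite !dotvE => stat_z grad_z.
lra.
Qed.

End DualBounds.

Lemma partial_sum_le_lim (R : realType) (u : nat -> R) (S : R) :
  (forall k, (1 <= k)%N -> 0 <= u k) ->
  (fun N : nat => \sum_(1 <= k < N) u k) @ \oo --> S ->
  forall N, \sum_(1 <= k < N) u k <= S.
Proof.
move=> u_ge0 u_sum N; rewrite -(cvg_lim (@Rhausdorff _) u_sum).
apply: nondecreasing_cvgn_le; last exact: cvgP u_sum.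
apply/nondecreasing_seqP => -[|M]; first by rewrite !big_geq.
by rewrite [leRHS]big_nat_recr //= lerDl u_ge0.
Qed.

Section InexactAugmentedLagrangian.
Variables (R : realType) (m n : nat) (A : 'M[R]_(m, n)) (b : 'cV[R]_m).
Variables (f : 'cV[R]_n -> R) (gf : 'cV[R]_n -> 'cV[R]_n) (g : 'cV[R]_n -> \bar R).
Variables (beta : R) (lstar : 'cV[R]_m) (x : nat -> 'cV[R]_n) (lam : nat -> 'cV[R]_m).
Variables (eta : nat -> R) (S : R).

Local Notation d := (dual f g A b beta).

Hypotheses (f_convex : convex_fun f) (f_grad : is_gradient f gf).
Hypotheses (g_proper : proper_fun g) (beta_gt0 : 0 < beta).
Hypothesis lstar_max : forall l, (d l <= d lstar)%E.
Hypothesis x_stationary : forall k, (1 <= k)%N -> forall z : 'cV[R]_n,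
  ((dotv (grad_fhat gf A b beta (x k.+1) (lam k)) (x k.+1 - z))%:E
     + g (x k.+1) - g z <= (eta k)%:E)%E.
Hypothesis lam_step : forall k, (1 <= k)%N -> lam k.+1 = lam k + beta *: (A *m x k.+1 - b).
Hypothesis eta_gt0 : forall k, (1 <= k)%N -> 0 < eta k.
Hypothesis eta_sum : (fun N : nat => \sum_(1 <= k < N) eta k) @ \oo --> S.

Local Notation res k := (A *m x k.+1 - b).
Local Notation lagr k := (fhat f A b beta (x k.+1) (lam k) + fine (g (x k.+1))).
Local Notation dualr l := (fine (d l)).
Local Notation gap k := (dualr lstar - dualr (lam k)).
Local Notation dist2 k := (dotv (lstar - lam k) (lstar - lam k)).

Lemma ial_g_fin k : (1 <= k)%N -> g (x k.+1) = (fine (g (x k.+1)))%:E.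
Proof.
move=> k1; have [[z gz_lt] g_gt] := g_proper.
have := x_stationary k1 z; have := g_gt (x k.+1); have := g_gt z.
by case: (g z) gz_lt => [gz| |] //= _ _; case: (g (x k.+1)).
Qed.

Lemma ial_dual_le k l : (1 <= k)%N -> (d l <= (lagr k + dotv (l - lam k) (res k))%:E)%E.
Proof.
move=> k1; apply: le_trans (dual_le_lagrangian A b f beta l (lam k) (ial_g_fin k1)) _.
by rewrite lee_fin; lra.
Qed.

Lemma ial_dual_ge k : (1 <= k)%N -> ((lagr k - eta k)%:E <= d (lam k))%E.
Proof.
move=> k1; have := dual_ge_stationary 0 f_convex f_grad beta_gt0 (ial_g_fin k1) (x_stationary k1).
by rewrite !dotv0l mul0r !subr0 !addr0.
Qed.

Lemma ial_dual_next_ge k : (1 <= k)%N ->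
  ((lagr k - eta k + beta / 2 * dotv (res k) (res k))%:E <= d (lam k.+1))%E.
Proof.
move=> k1; rewrite lam_step //.
apply: le_trans (dual_ge_stationary _ f_convex f_grad beta_gt0 (ial_g_fin k1) (x_stationary k1)).
rewrite lee_fin !dotvZl !dotvZr le_eqVlt; apply/orP; left; apply/eqP.
by field; rewrite gt_eqF.
Qed.

Lemma ial_dual_fin k : (1 <= k)%N -> d (lam k) = (dualr (lam k))%:E.
Proof.
move=> k1; have := ial_dual_ge k1; have := ial_dual_le (lam k) k1.
by case: (d (lam k)).
Qed.

Lemma ial_dual_max_fin : d lstar = (dualr lstar)%:E.
Proof.
have := le_trans (ial_dual_ge (leqnn 1)) (lstar_max _); have := ial_dual_le lstar (leqnn 1).
by case: (d lstar).
Qed.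

Lemma ial_dual_gapE k : (1 <= k)%N -> (d lstar - d (lam k))%E = (gap k)%:E.
Proof. by move=> k1; rewrite ial_dual_max_fin ial_dual_fin. Qed.

Lemma ial_dualr_le k : (1 <= k)%N -> dualr (lam k) <= lagr k.
Proof.
by move=> k1; have := ial_dual_le (lam k) k1; rewrite ial_dual_fin // subrr dotv0l addr0.
Qed.

Lemma ial_dualr_ge k : (1 <= k)%N -> lagr k - eta k <= dualr (lam k).
Proof. by move=> k1; have := ial_dual_ge k1; rewrite ial_dual_fin. Qed.

Lemma ial_dualr_next_ge k : (1 <= k)%N ->
  lagr k - eta k + beta / 2 * dotv (res k) (res k) <= dualr (lam k.+1).
Proof. by move=> k1; have := ial_dual_next_ge k1; rewrite ial_dual_fin. Qed.

Lemma ial_dualr_max_le k : (1 <= k)%N ->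
  dualr lstar <= lagr k + dotv (lstar - lam k) (res k).
Proof. by move=> k1; have := ial_dual_le lstar k1; rewrite ial_dual_max_fin. Qed.

Lemma ial_dualr_le_max k : (1 <= k)%N -> dualr (lam k) <= dualr lstar.
Proof. by move=> k1; have := lstar_max (lam k); rewrite ial_dual_fin // ial_dual_max_fin. Qed.

Lemma ial_dist_step k : (1 <= k)%N -> dist2 k.+1 <= dist2 k + 2 * beta * eta k.
Proof.
move=> k1; have max_le := ial_dualr_max_le k1; have next_ge := ial_dualr_next_ge k1.
have le_max := ial_dualr_le_max (leqW k1); have rr0 := dotvv_ge0 (res k).
have -> : lstar - lam k.+1 = (lstar - lam k) - beta *: res k.
  by rewrite lam_step // opprD addrA.
rewrite dotv_sqrB.
have : beta * (beta / 2 * dotv (res k) (res k) - eta k) <= beta * dotv (lstar - lam k) (res k).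
  by rewrite ler_pM2l //; lra.
nra.
Qed.

Local Notation B2 := (enorm (lam 1%N - lstar) ^+ 2 + 2 * beta * S).

Lemma ial_dist_le k : (1 <= k)%N -> dist2 k <= B2.
Proof.
have eta_le := partial_sum_le_lim (fun k k1 => ltW (eta_gt0 k1)) eta_sum.
have dist_sum j : dist2 j.+1 <= dist2 1%N + 2 * beta * \sum_(1 <= i < j.+1) eta i.
  elim: j => [|j IH]; first by rewrite big_geq // mulr0 addr0.
  apply: le_trans (ial_dist_step (ltn0Sn _)) _.
  by rewrite [in leRHS]big_nat_recr //= mulrDr addrA lerD2r.
case: k => // k _; apply: le_trans (dist_sum k) _.
by rewrite sqr_enorm -opprB dotvNl dotvNr opprK lerD2l ler_pM2l ?mulr_gt0 // eta_le.
Qed.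

Lemma ial_B2_gt0 : 0 < B2.
Proof.
have S_ge := partial_sum_le_lim (fun k k1 => ltW (eta_gt0 k1)) eta_sum 2.
rewrite big_nat1 in S_ge.
by apply: ltr_wpDl (sqr_ge0 _) _; rewrite !mulr_gt0 // (lt_le_trans (eta_gt0 _) S_ge).
Qed.

Lemma ial_gap_step k : (1 <= k)%N -> gap k.+1 <= gap k + eta k.
Proof.
move=> k1; have := ial_dualr_le k1; have := ial_dualr_next_ge k1.
have : 0 <= beta / 2 * dotv (res k) (res k) by rewrite mulr_ge0 ?dotvv_ge0 ?divr_ge0 ?ltW.
lra.
Qed.

Lemma ial_gap_descent k : (1 <= k)%N -> eta k <= gap k ->
  gap k.+1 <= gap k + eta k - 2 * (beta / (4 * Num.sqrt B2 ^+ 2)) * (gap k - eta k) ^+ 2.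
Proof.
move=> k1 eta_le; rewrite sqr_sqrtr ?(ltW ial_B2_gt0) //.
have B2_gt0 := ial_B2_gt0; have rr0 := dotvv_ge0 (res k).
have := ial_dualr_max_le k1; have := ial_dualr_ge k1.
have := ial_dualr_le k1; have := ial_dualr_next_ge k1.
set p := dotv (lstar - lam k) (res k); set rr := dotv (res k) (res k) in rr0 *.
move=> next_ge dual_le dual_ge max_le.
have gap_le_p : gap k - eta k <= p by lra.
have gap_sqr : (gap k - eta k) ^+ 2 <= B2 * rr.
  apply: le_trans (le_trans (dotv_sqr_le (lstar - lam k) (res k)) _).
    by rewrite -/p ler_sqr ?nnegrE ?subr_ge0 //; lra.
  by rewrite -/rr; apply: ler_wpM2r => //; apply: ial_dist_le.
have rr_le : beta * rr <= 2 * (gap k - gap k.+1 + eta k) by lra.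
have -> : 2 * (beta / (4 * B2)) * (gap k - eta k) ^+ 2 =
    beta * (gap k - eta k) ^+ 2 / (2 * B2) by field; rewrite gt_eqF.
suff : beta * (gap k - eta k) ^+ 2 / (2 * B2) <= gap k - gap k.+1 + eta k by lra.
rewrite ler_pdivrMr ?mulr_gt0 //.
have := ler_wpM2l (ltW beta_gt0) gap_sqr; nra.
Qed.

End InexactAugmentedLagrangian.

Theorem theorem2 (R : realType) (m n : nat) (A : 'M[R]_(m, n)) (b : 'cV[R]_m)
  (f : 'cV[R]_n -> R) (gf : 'cV[R]_n -> 'cV[R]_n) (g : 'cV[R]_n -> \bar R)
  (beta : R) (lstar : 'cV[R]_m)
  (x : nat -> 'cV[R]_n) (lam : nat -> 'cV[R]_m) (eta : nat -> R)
  (S : R) (k0 : nat) :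
  (* setting *)
  convex_fun f -> is_gradient f gf -> lipschitz_grad gf ->
  proper_fun g -> convex_efun g -> closed_efun g -> bounded_dom g ->
  0 < beta ->
  (* lstar maximizes d *)
  (forall l, (dual f g A b beta l <= dual f g A b beta lstar)%E) ->
  (* IAL framework *)
  (g (x 1%N) < +oo)%E ->
  (forall k, (1 <= k)%N ->
     forall z : 'cV[R]_n,
       ((dotv (grad_fhat gf A b beta (x k.+1) (lam k)) (x k.+1 - z))%:E
          + g (x k.+1) - g z <= (eta k)%:E)%E) ->
  (forall k, (1 <= k)%N -> lam k.+1 = lam k + beta *: (A *m x k.+1 - b)) ->
  (* tolerances: positive, nonincreasing, summable with sum S = sum_{k>=1} eta_k *)
  (forall k, (1 <= k)%N -> 0 < eta k) ->
  (forall k, (1 <= k)%N -> eta k.+1 <= eta k) ->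
  (fun N : nat => \sum_(1 <= k < N) eta k) @ \oo --> S ->
  let delta := fun k => (dual f g A b beta lstar - dual f g A b beta (lam k))%E in
  let B := Num.sqrt (enorm (lam 1%N - lstar) ^+ 2 + 2 * beta * S) in
  let theta := beta / (4 * B ^+ 2) in
  (4 <= k0)%N ->
  (forall k, (k0 <= k)%N -> (delta k <= (1 / (2 * theta))%:E)%E) ->
  (forall k, (k0 <= k)%N -> eta k <= 1 / (24 * theta)) ->
  (forall k, (k0 <= k)%N -> Num.sqrt (eta k.+1 / eta k) >= (k%:R - 2) / k%:R) ->
  let tau1 := k0%:R / (4 * theta) in
  let tau2 := 1 / (4 * theta * Num.sqrt (eta k0)) in
  forall k, (k0 <= k)%N -> (delta k <= (tau1 / k%:R + tau2 * Num.sqrt (eta k))%:E)%E.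
Proof.
move=> f_convex f_grad _ g_proper _ _ _ beta_gt0 lstar_max _ x_stat lam_step eta_gt0
  eta_mono eta_sum delta B theta k04 delta_le eta_le eta_ratio tau1 tau2 k kk.
have k0_ge1 : (1 <= k0)%N by apply: leq_trans k04.
have ge_k0 j : (k0 <= j)%N -> (1 <= j)%N by move/(leq_trans k0_ge1).
have gapE := ial_dual_gapE f_convex f_grad g_proper beta_gt0 lstar_max x_stat.
have theta_gt0 : 0 < theta.
  have B2_gt0 := ial_B2_gt0 lstar lam beta_gt0 eta_gt0 eta_sum.
  by rewrite divr_gt0 // mulr_gt0 // /B sqr_sqrtr // ltW.
have eta_k0_gt0 := eta_gt0 _ (ge_k0 _ (leqnn k0)).
pose gap j := fine (dual f g A b beta lstar) - fine (dual f g A b beta (lam j)).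
rewrite /delta gapE ?ge_k0 // lee_fin -/(gap k).
have -> : tau1 / k%:R + tau2 * Num.sqrt (eta k) =
    (k0%:R / k%:R + Num.sqrt (eta k) / Num.sqrt (eta k0)) / (4 * theta).
  by rewrite /tau1 /tau2; field; rewrite !gt_eqF ?sqrtr_gt0 ?ltr0n ?(leq_trans k0_ge1).
apply: (perturbed_descent_rate_scaled (a := gap) theta_gt0 k04 _
  (eta_le _ (leqnn k0)) _ _ eta_ratio _ _ kk) => [|j jk|j jk|j jk|j jk].
- by have := delta_le _ (leqnn k0); rewrite /delta gapE.
- exact/eta_gt0/ge_k0.
- exact/eta_mono/ge_k0.
- exact: (ial_gap_step _ f_convex f_grad g_proper beta_gt0 x_stat lam_step (ge_k0 _ jk)).
- exact: (ial_gap_descent f_convex f_grad g_proper beta_gt0 lstar_max x_stat lam_step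
    eta_gt0 eta_sum (ge_k0 _ jk)).
Qed.
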